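(* Let $\mathbf{IL}\mathsf{X}$ be a Horn logic and let $\Gamma$ be a finite set of formulas. In the construction of the systematic $\mathbf{IL}\mathsf{X}$-tableau for $\Gamma$ (stages $T_0\subseteq T_1\subseteq\cdots$ with markings $\mu(T_i)$), if a node $\sigma :: A$ is marked awake in $\mu(T_{n+1})$, then at some later stage the procedure selects (visits) the node $\sigma :: A$.
   Context: Formulas: built from a countable set $\mathsf{Prop}$ of propositional variables by $\neg$, $\to$, unary $\Box$ and binary $\rhd$. $\mathbf{IL}$ is the modal logic with axioms all instances of propositional tautologies and the schemes $\Box(A\to B)\to(\Box A\to\Box B)$, $\Box(\Box A\to A)\to\Box A$, $\Box(A\to B)\to A\rhd B$, $(A\rhd B)\wedge(B\rhd C)\to A\rhd C$, $(A\rhd C)\wedge(B\rhd C)\to A\vee B\rhd C$, $A\rhd B\to(\Diamond A\to\Diamond B)$, $\Diamond A\rhd A$ (with $\Diamond=\neg\Box\neg$), and rules modus ponens and necessitation $A/\Box A$. An $\mathbf{IL}$-frame is $\langle W,R,S\rangle$ with $W\neq\emptyset$, $R$ a transitive Noetherian binary relation (no infinite chains $x_0Rx_1Rx_2\cdots$), $S$ ternary, writing $yS_xz$ for $(x,y,z)\in S$, such that each $S_x$ is a reflexive transitive relation on $\{y: xRy\}$ and $xRyRz$ implies $yS_xz$. $\mathbf{IL}\mathsf{X}$ is $\mathbf{IL}$ plus axiom schemes $\mathsf{X}$; it is a Horn logic if there is a set $\mathcal{C}_{\mathsf X}$ of strict universal Horn sentences $\forall\cdots\forall(\varphi_1\wedge\dots\wedge\varphi_n\to\psi)$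 ($n\ge 0$, $\varphi_i,\psi$ atomic) in the language with binary $R$ and ternary $S$ such that an $\mathbf{IL}$-frame validates all theorems of $\mathbf{IL}\mathsf{X}$ iff it satisfies $\mathcal{C}_{\mathsf X}$. Labels: $0$ is a label; if $\sigma$ is a label and $n\in\mathbb N$, $\sigma Rn$ is a label; if $\sigma,\rho$ are labels with $\rho$ a strict non-empty prefix of $\sigma$, then $\sigma S_\rho n$ is a label. Extended formulas additionally allow unary operators $\Box_\rho$ for labels $\rho$. A labelled formula is $\sigma :: A$. For a set $\Lambda$ of labels, $\mathbf R^\Lambda\subseteq\Lambda^2$, $\mathbf S^\Lambda\subseteq\Lambda^3$ are the least relations such that: (1) $\sigma,\sigma Rn\in\Lambda\Rightarrow \sigma\mathbf R\,\sigma Rn$; (2) $\mathbf R$ transitive; (3) $\sigma,\rho,\sigma S_\rho n\in\Lambda\Rightarrow \sigma\mathbf S_\rho\,\sigma S_\rho n$; (4) $\sigma\mathbf R\tau\Rightarrow\tau\mathbf S_\sigma\tau$; (5) $\rho\mathbf R\sigma\mathbf R\tau\Rightarrow\sigma\mathbf S_\rho\tau$; (6) $\sigma\mathbf S_\rho\tau\mathbf S_\rho\upsilon\Rightarrow\sigma\mathbf S_\rho\upsilon$; (7) $\sigma\mathbf S_\rho\tau\Rightarrow\rho\mathbf R\sigma$ and $\rho\mathbf R\tau$; (8) $\langle\Lambda,\mathbf R^\Lambda,\mathbf S^\Lambda\rangle\models\mathcal C_{\mathsf X}$. Here $\sigma\mathbf S_\rho\tau$ means $(\rho,\sigma,\tau)\in\mathbf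 S^\Lambda$. For a branch $\mathcal B$, $\mathrm{lab}(\mathcal B)$ is the set of labels occurring in it, and relations on it are $\mathbf R^{\mathrm{lab}(\mathcal B)},\mathbf S^{\mathrm{lab}(\mathcal B)}$. A branch is closed if it contains $\sigma::A$ and $\sigma::\neg A$ for some $\sigma,A$, otherwise open. Systematic $\mathbf{IL}\mathsf X$-tableau for finite $\Gamma$: built in stages $T_0\subseteq T_1\subseteq\cdots$ of downward growing trees of labelled formulas, each node marked exactly one of awake, asleep, finished ($\mu(T_i)$ is the marked tree). Stage 0: $T_0$ consists of nodes $0::A$, $A\in\Gamma$, one below the other, all awake. Stage $n+1$: choose an awake node $\sigma::A$ of $\mu(T_n)$ closest to the root (leftmost among equally close). If $A$ is $p$ or $\neg p$ with $p\in\mathsf{Prop}$, mark it finished and stop the stage. Otherwise (''extend $\mathcal B$'' = append new nodes at the bottom of $\mathcal B$; all new nodes marked awake): if $A=\neg\neg B$: extend every open branch through the node with $\sigma::B$; mark node finished. If $A=B\to C$: for every open branch through it split its end, left $\sigma::\neg B$, right $\sigma::C$; finished. If $A=\neg(B\to C)$: extend every open branch through it with $\sigma::B,\sigma::\neg C$; finished. If $A=\Box B$: for every open branch $\mathcal B$ through it and every $\tau\in\mathrm{lab}(\mathcal B)$ with $\sigma\mathbf R\tau$, extend $\mathcal B$ with $\tau::B$; mark node asleep. If $A=\neg\Box B$: for every open branch $\mathcal B$ through it, with $n$ least such that $\sigma Rn\notin\mathrm{lab}(\mathcal B)$, extend $\mathcal B$ with $\sigma Rn::\neg B$ and $\sigma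 Rn::\Box B$; mark node finished; moreover mark awake every node $\tau::\Box D$ and $\tau::D\rhd E$ on $\mathcal B$ with $\tau\mathbf R\,\sigma Rn$ and every node $\tau::\Box_\kappa D$ on $\mathcal B$ with $\tau\mathbf S_\kappa\,\sigma Rn$. If $A=\Box_\rho B$: for every branch $\mathcal B$ through it and every $\tau\in\mathrm{lab}(\mathcal B)$ with $\sigma\mathbf S_\rho\tau$, extend with $\tau::B$; asleep. If $A=\neg\Box_\rho B$: for every open branch $\mathcal B$ through it, with $n$ least such that $\sigma S_\rho n\notin\mathrm{lab}(\mathcal B)$, extend with $\sigma S_\rho n::\neg B$, $\sigma S_\rho n::\Box B$; finished; reawaken as in the $\neg\Box$ case with $\sigma S_\rho n$ in place of $\sigma Rn$. If $A=B\rhd C$: for every open branch $\mathcal B$ through it and every $\tau\in\mathrm{lab}(\mathcal B)$ with $\sigma\mathbf R\tau$, split the end, left $\tau::\neg B$, right $\tau::\neg\Box_\sigma\neg C$; asleep. If $A=\neg(B\rhd C)$: for every open branch $\mathcal B$ through it, with $n$ least such that $\sigma Rn\notin\mathrm{lab}(\mathcal B)$, extend with $\sigma Rn::B$, $\sigma Rn::\Box_\sigma\neg C$, $\sigma Rn::\Box\neg B$; finished; reawaken as in the $\neg\Box$ case. The systematic tableau is $\bigcup_i T_i$. *)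

From Stdlib Require Import List Arith.
Import ListNotations.

Inductive form : Type :=
| Var : nat -> form
| Neg : form -> form
| Imp : form -> form -> form
| Box : form -> form
| Rhd : form -> form -> form.

Definition And (A B : form) : form := Neg (Imp A (Neg B)).
Definition Or  (A B : form) : form := Imp (Neg A) B.
Definition Dia (A : form) : form := Neg (Box (Neg A)).

Fixpoint subst (s : nat -> form) (A : form) : form :=
  match A with
  | Var p => s p
  | Neg B => Neg (subst s B)
  | Imp B C => Imp (subst s B) (subst s C)
  | Box B => Box (subst s B)
  | Rhd B C => Rhd (subst s B) (subst s C)
  end.

Fixpoint prop_only (A : form) : Prop :=
  match A with
  | Var _ => True
  | Neg B => prop_only B
  | Imp B C => prop_only B /\ prop_only C
  | Box _ => False
  | Rhd _ _ => False
  end.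

Fixpoint beval (v : nat -> bool) (A : form) : bool :=
  match A with
  | Var p => v p
  | Neg B => negb (beval v B)
  | Imp B C => implb (beval v B) (beval v C)
  | Box _ => false
  | Rhd _ _ => false
  end.

Definition taut_instance (A : form) : Prop :=
  exists t s, prop_only t /\ (forall v, beval v t = true) /\ A = subst s t.

Definition p0 := Var 0.
Definition p1 := Var 1.
Definition p2 := Var 2.

Inductive IL_scheme : form -> Prop :=
| sch_K  : IL_scheme (Imp (Box (Imp p0 p1)) (Imp (Box p0) (Box p1)))
| sch_L  : IL_scheme (Imp (Box (Imp (Box p0) p0)) (Box p0))
| sch_J1 : IL_scheme (Imp (Box (Imp p0 p1)) (Rhd p0 p1))
| sch_J2 : IL_scheme (Imp (And (Rhd p0 p1) (Rhd p1 p2)) (Rhd p0 p2))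
| sch_J3 : IL_scheme (Imp (And (Rhd p0 p2) (Rhd p1 p2)) (Rhd (Or p0 p1) p2))
| sch_J4 : IL_scheme (Imp (Rhd p0 p1) (Imp (Dia p0) (Dia p1)))
| sch_J5 : IL_scheme (Rhd (Dia p0) p0).

Inductive ILX_thm (X : form -> Prop) : form -> Prop :=
| thm_taut A : taut_instance A -> ILX_thm X A
| thm_IL A s : IL_scheme A -> ILX_thm X (subst s A)
| thm_X A s : X A -> ILX_thm X (subst s A)
| thm_mp A B : ILX_thm X (Imp A B) -> ILX_thm X A -> ILX_thm X B
| thm_nec A : ILX_thm X A -> ILX_thm X (Box A).

(** * Frames and semantics.  [fS x y z] means  y S_x z. *)
Record frame := Frame {
  fW : Type;
  fR : fW -> fW -> Prop;
  fS : fW -> fW -> fW -> Prop }.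

Definition is_ILframe (F : frame) : Prop :=
  inhabited (fW F) /\
  (forall x y z, fR F x y -> fR F y z -> fR F x z) /\
  (~ exists f : nat -> fW F, forall i, fR F (f i) (f (S i))) /\
  (forall x y z, fS F x y z -> fR F x y /\ fR F x z) /\
  (forall x y, fR F x y -> fS F x y y) /\
  (forall x y z u, fS F x y z -> fS F x z u -> fS F x y u) /\
  (forall x y z, fR F x y -> fR F y z -> fS F x y z).

Fixpoint forces (F : frame) (V : nat -> fW F -> Prop) (w : fW F) (A : form) : Prop :=
  match A with
  | Var p => V p w
  | Neg B => ~ forces F V w B
  | Imp B C => forces F V w B -> forces F V w C
  | Box B => forall u, fR F w u -> forces F V u B
  | Rhd B C => forall u, fR F w u -> forces F V u B ->
                 exists v, fS F w u v /\ forces F V v C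
  end.

Definition valid (F : frame) (A : form) : Prop :=
  forall V w, forces F V w A.

(** [HS x y z] is the atom  S(x,y,z), i.e.  y S_x z. *)
Inductive hatom : Type :=
| HR : nat -> nat -> hatom
| HS : nat -> nat -> nat -> hatom.

Record horn := Horn { hprem : list hatom; hconc : hatom }.

Definition hatom_sat {W : Type} (R : W -> W -> Prop) (S : W -> W -> W -> Prop)
  (v : nat -> W) (a : hatom) : Prop :=
  match a with
  | HR x y => R (v x) (v y)
  | HS x y z => S (v x) (v y) (v z)
  end.

Definition horn_holds {W : Type} (D : W -> Prop) (R : W -> W -> Prop)
  (S : W -> W -> W -> Prop) (h : horn) : Prop :=
  forall v : nat -> W, (forall i, D (v i)) ->
    (forall a, In a (hprem h) -> hatom_sat R S v a) -> hatom_sat R S v (hconc h).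

Definition frame_sat_horns (HC : horn -> Prop) (F : frame) : Prop :=
  forall h, HC h -> horn_holds (fun _ => True) (fR F) (fS F) h.

Definition Horn_logic_wrt (X : form -> Prop) (HC : horn -> Prop) : Prop :=
  forall F, is_ILframe F ->
    ((forall A, ILX_thm X A -> valid F A) <-> frame_sat_horns HC F).

(** [LR s n] is  s R n ;  [LS s r n] is  s S_r n. *)
Inductive label : Type :=
| L0 : label
| LR : label -> nat -> label
| LS : label -> label -> nat -> label.

Inductive eform : Type :=
| EVar : nat -> eform
| ENeg : eform -> eform
| EImp : eform -> eform -> eform
| EBox : eform -> eform
| ERhd : eform -> eform -> eform
| EBoxL : label -> eform -> eform.

Fixpoint emb (A : form) : eform :=
  match A with
  | Var p => EVar p
  | Neg B => ENeg (emb B)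
  | Imp B C => EImp (emb B) (emb C)
  | Box B => EBox (emb B)
  | Rhd B C => ERhd (emb B) (emb C)
  end.

Definition lform : Type := (label * eform)%type.

(** * The relations R^Lambda and S^Lambda (least relations closed under (1)-(8)).
    [S rho sigma tau] means  sigma S_rho tau. *)
Definition closedRS (HC : horn -> Prop) (L : label -> Prop)
  (R : label -> label -> Prop) (S : label -> label -> label -> Prop) : Prop :=
  (forall s n, L s -> L (LR s n) -> R s (LR s n)) /\
  (forall x y z, R x y -> R y z -> R x z) /\
  (forall s r n, L s -> L r -> L (LS s r n) -> S r s (LS s r n)) /\
  (forall s t, R s t -> S s t t) /\
  (forall r s t, R r s -> R s t -> S r s t) /\
  (forall r s t u, S r s t -> S r t u -> S r s u) /\
  (forall r s t, S r s t -> R r s /\ R r t) /\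
  (forall h, HC h -> horn_holds L R S h).

Definition Rlab (HC : horn -> Prop) (L : label -> Prop) (x y : label) : Prop :=
  forall R S, closedRS HC L R S -> R x y.

Definition Slab (HC : horn -> Prop) (L : label -> Prop) (r s t : label) : Prop :=
  forall R S, closedRS HC L R S -> S r s t.

(** The root has address [], the children of address b are
   b ++ [0] (left / only child) and b ++ [1] (right child). *)
Inductive mark : Type := Awake | Asleep | Finished.

Definition tab : Type := list nat -> option (lform * mark).

Definition prefix (b l : list nat) : Prop := exists c, l = b ++ c.

(** branches are identified with their last node (a leaf) *)
Definition leaf (T : tab) (l : list nat) : Prop :=
  T l <> None /\ forall i, T (l ++ [i]) = None.

Definition lab (T : tab) (l : list nat) (t : label) : Prop :=
  exists b x m, prefix b l /\ T b = Some ((t, x), m).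

Definition open_branch (T : tab) (l : list nat) : Prop :=
  ~ exists s x b1 b2 m1 m2,
      prefix b1 l /\ prefix b2 l /\
      T b1 = Some ((s, x), m1) /\ T b2 = Some ((s, ENeg x), m2).

Definition init (G : list form) : tab :=
  fun b => if forallb (Nat.eqb 0) b then
             match nth_error G (length b) with
             | Some A => Some ((L0, emb A), Awake)
             | None => None
             end
           else None.

(** breadth-first order: closer to the root, then leftmost *)
Fixpoint lex_le (a b : list nat) : Prop :=
  match a, b with
  | [], _ => True
  | _ :: _, [] => False
  | x :: a', y :: b' => x < y \/ (x = y /\ lex_le a' b')
  end.

Definition addr_le (a b : list nat) : Prop :=
  length a < length b \/ (length a = length b /\ lex_le a b).

Definition selected (T : tab) (a : list nat) (x : lform) : Prop :=
  T a = Some (x, Awake) /\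
  forall b y, T b = Some (y, Awake) -> addr_le a b.

(** Extensions of a branch end: a chain of nodes appended one below the
    other, or a sequence of successive splittings (each pair (p,q) splits
    every end produced so far, left p, right q). *)
Inductive ext : Type :=
| Chain : list lform -> ext
| Splits : list (lform * lform) -> ext.

Definition new_at (l : list nat) (e : ext) (b : list nat) (x : lform) : Prop :=
  match e with
  | Chain xs => exists i, b = l ++ repeat 0 (S i) /\ nth_error xs i = Some x
  | Splits ps => exists bs d p q,
      b = l ++ bs ++ [d] /\ Forall (fun k => k <= 1) bs /\ d <= 1 /\
      nth_error ps (length bs) = Some (p, q) /\
      x = (if Nat.eqb d 0 then p else q)
  end.

Definition apply_ext (T : tab) (a : list nat) (newm : mark)
  (relev : list nat -> Prop) (E : list nat -> ext)
  (awaken : list nat -> Prop) (T' : tab) : Prop :=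
  (forall x m, T a = Some (x, m) -> T' a = Some (x, newm)) /\
  (forall b x m, b <> a -> T b = Some (x, m) -> awaken b -> T' b = Some (x, Awake)) /\
  (forall b x m, b <> a -> T b = Some (x, m) -> ~ awaken b -> T' b = Some (x, m)) /\
  (forall b, T b = None ->
     forall y, T' b = Some y <->
       exists l x, relev l /\ new_at l (E l) b x /\ y = (x, Awake)).

Definition through (T : tab) (a l : list nat) : Prop := leaf T l /\ prefix a l.
Definition open_through (T : tab) (a l : list nat) : Prop :=
  through T a l /\ open_branch T l.

Definition enum_R (HC : horn -> Prop) (T : tab) (l : list nat) (s : label)
  (ts : list label) : Prop :=
  NoDup ts /\ forall t, In t ts <-> (lab T l t /\ Rlab HC (lab T l) s t).

Definition enum_S (HC : horn -> Prop) (T : tab) (l : list nat) (r s : label)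
  (ts : list label) : Prop :=
  NoDup ts /\ forall t, In t ts <-> (lab T l t /\ Slab HC (lab T l) r s t).

Definition least_fresh (L : label -> Prop) (mk : nat -> label) (n : nat) : Prop :=
  ~ L (mk n) /\ forall k, k < n -> L (mk k).

Definition add_label (L : label -> Prop) (nu : label) : label -> Prop :=
  fun t => L t \/ t = nu.

Definition reawaken (HC : horn -> Prop) (T : tab) (relev : list nat -> Prop)
  (nu : list nat -> label) (b : list nat) : Prop :=
  exists l, relev l /\ prefix b l /\
    exists t x m, T b = Some ((t, x), m) /\
      ((((exists D, x = EBox D) \/ (exists D E, x = ERhd D E)) /\
         Rlab HC (add_label (lab T l) (nu l)) t (nu l))
       \/ (exists k D, x = EBoxL k D /\
           Slab HC (add_label (lab T l) (nu l)) k t (nu l))).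

Definition no_ext : list nat -> ext := fun _ => Chain [].
Definition nowhere : list nat -> Prop := fun _ => False.

Definition rule (HC : horn -> Prop) (T : tab) (a : list nat) (s : label)
  (A : eform) (T' : tab) : Prop :=
  match A with
  | EVar _ => apply_ext T a Finished nowhere no_ext nowhere T'
  | ENeg (EVar _) => apply_ext T a Finished nowhere no_ext nowhere T'
  | ENeg (ENeg B) =>
      apply_ext T a Finished (open_through T a) (fun _ => Chain [(s, B)]) nowhere T'
  | EImp B C =>
      apply_ext T a Finished (open_through T a)
        (fun _ => Splits [((s, ENeg B), (s, C))]) nowhere T'
  | ENeg (EImp B C) =>
      apply_ext T a Finished (open_through T a)
        (fun _ => Chain [(s, B); (s, ENeg C)]) nowhere T'
  | EBox B =>
      exists f : list nat -> list label,
        (forall l, open_through T a l -> enum_R HC T l s (f l)) /\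
        apply_ext T a Asleep (open_through T a)
          (fun l => Chain (map (fun t => (t, B)) (f l))) nowhere T'
  | ENeg (EBox B) =>
      exists g : list nat -> nat,
        (forall l, open_through T a l -> least_fresh (lab T l) (LR s) (g l)) /\
        apply_ext T a Finished (open_through T a)
          (fun l => Chain [(LR s (g l), ENeg B); (LR s (g l), EBox B)])
          (reawaken HC T (open_through T a) (fun l => LR s (g l))) T'
  | EBoxL r B =>
      exists f : list nat -> list label,
        (forall l, through T a l -> enum_S HC T l r s (f l)) /\
        apply_ext T a Asleep (through T a)
          (fun l => Chain (map (fun t => (t, B)) (f l))) nowhere T'
  | ENeg (EBoxL r B) =>
      exists g : list nat -> nat,
        (forall l, open_through T a l -> least_fresh (lab T l) (LS s r) (g l)) /\
        apply_ext T a Finished (open_through T a)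
          (fun l => Chain [(LS s r (g l), ENeg B); (LS s r (g l), EBox B)])
          (reawaken HC T (open_through T a) (fun l => LS s r (g l))) T'
  | ERhd B C =>
      exists f : list nat -> list label,
        (forall l, open_through T a l -> enum_R HC T l s (f l)) /\
        apply_ext T a Asleep (open_through T a)
          (fun l => Splits (map (fun t => ((t, ENeg B), (t, ENeg (EBoxL s (ENeg C)))))
                                (f l))) nowhere T'
  | ENeg (ERhd B C) =>
      exists g : list nat -> nat,
        (forall l, open_through T a l -> least_fresh (lab T l) (LR s) (g l)) /\
        apply_ext T a Finished (open_through T a)
          (fun l => Chain [(LR s (g l), B); (LR s (g l), EBoxL s (ENeg C));
                           (LR s (g l), EBox (ENeg B))])
          (reawaken HC T (open_through T a) (fun l => LR s (g l))) T'
  end.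

(** One stage: T' = T_{n+1} from T = mu(T_n).  If no node is awake the tree
    is left unchanged. *)
Definition stage (HC : horn -> Prop) (T T' : tab) : Prop :=
  ((forall b x, T b <> Some (x, Awake)) /\ forall b, T' b = T b) \/
  (exists a s A, selected T a (s, A) /\ rule HC T a s A T').

Definition systematic_tableau (HC : horn -> Prop) (G : list form)
  (T : nat -> tab) : Prop :=
  (forall b, T 0 b = init G b) /\ forall n, stage HC (T n) (T (S n)).

From Stdlib Require Import List Arith Lia Classical.
Import ListNotations.

(* Let a be an awake node at depth D.  Every node selected before a lies at
   depth at most D, so only the finitely many binary addresses of length at
   most D matter.  Selecting a node with a formula that is not of box type
   finishes it, which lowers the number of positions that are empty or hold an
   unfinished formula not of box type; new nodes only fill empty positions and
   reawakening only touches box-type nodes, so this number never grows.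
   Selecting a box-type node puts it to sleep and reawakens nothing; if awake
   nodes at depth d weigh W^(D+1-d) with W larger than the number of
   addresses, the weight lost there exceeds the weight of all nodes created
   below it.  The two measures thus decrease lexicographically until a is
   selected.  Neither the Horn condition nor [NoDup G] plays a role. *)

Lemma eventually_of_lex_descent (P Q : nat -> Prop) (k p : nat -> nat) :
  (forall m, P m -> ~ Q m ->
     P (S m) /\ k (S m) <= k m /\ (k (S m) < k m \/ p (S m) < p m)) ->
  forall m, P m -> exists m', m <= m' /\ Q m'.
Proof.
  intros Hstep.
  assert (Hind : forall i j m, k m = i -> p m = j -> P m -> exists m', m <= m' /\ Q m').
  { intros i; induction i as [i IHi] using (well_founded_induction lt_wf).
    intros j; induction j as [j IHj] using (well_founded_induction lt_wf).
    intros m Hk Hp Hm.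
    destruct (classic (Q m)) as [Hq | Hq]; [exists m; split; auto |].
    destruct (Hstep m Hm Hq) as (Hm' & Hle & Hlt).
    assert (Hlater : exists m', S m <= m' /\ Q m').
    { destruct (Nat.eq_dec (k (S m)) (k m)) as [Heq | Hneq].
      - destruct Hlt as [Hlt | Hlt]; [lia |].
        subst; exact (IHj _ Hlt (S m) Heq eq_refl Hm').
      - subst; exact (IHi (k (S m)) ltac:(lia) _ (S m) eq_refl eq_refl Hm'). }
    destruct Hlater as (m' & ? & ?); exists m'; split; [lia | assumption]. }
  intros m; exact (Hind _ _ m eq_refl eq_refl).
Qed.

Section ListSum.
Variable A : Type.

Lemma list_sum_map_le_shift (l : list A) (f g : A -> nat) (k : nat) :
  (forall b, In b l -> f b <= g b + k) ->
  list_sum (map f l) <= list_sum (map g l) + length l * k.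
Proof.
  induction l as [|x l IH]; simpl; intros Hle; [lia |].
  pose proof (Hle x (or_introl eq_refl)).
  pose proof (IH (fun b Hb => Hle b (or_intror Hb))); lia.
Qed.

Lemma list_sum_map_le_shift_at (l : list A) (c : A) (f g : A -> nat) (v k : nat) :
  In c l -> f c + v <= g c + k ->
  (forall b, In b l -> f b <= g b + k) ->
  list_sum (map f l) + v <= list_sum (map g l) + length l * k.
Proof.
  induction l as [|x l IH]; simpl; intros Hc Hcv Hle; [contradiction |].
  destruct Hc as [-> | Hc].
  - pose proof (list_sum_map_le_shift l f g k (fun b Hb => Hle b (or_intror Hb))); lia.
  - pose proof (Hle x (or_introl eq_refl)).
    pose proof (IH Hc Hcv (fun b Hb => Hle b (or_intror Hb))); lia.
Qed.

End ListSum.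

Definition binary (b : list nat) : Prop := Forall (fun k => k <= 1) b.

Definition binary_tab (T : tab) : Prop := forall b y, T b = Some y -> binary b.

Fixpoint addrs_upto (d : nat) : list (list nat) :=
  match d with
  | 0 => [[]]
  | S d' => [] :: map (cons 0) (addrs_upto d') ++ map (cons 1) (addrs_upto d')
  end.

Lemma in_addrs_upto (d : nat) (b : list nat) :
  binary b -> length b <= d -> In b (addrs_upto d).
Proof.
  revert b; induction d as [|d IH]; intros b Hb Hlen.
  - destruct b; simpl in *; [left; reflexivity | lia].
  - destruct b as [|k b]; [left; reflexivity |].
    inversion Hb as [|? ? Hk Hb']; subst; simpl in Hlen.
    right; apply in_or_app.
    destruct k as [|[|k]]; [left | right | lia]; apply in_map, IH; auto; lia.
Qed.

Lemma addrs_upto_length (d : nat) (b : list nat) :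
  In b (addrs_upto d) -> length b <= d.
Proof.
  revert b; induction d as [|d IH]; simpl; intros b Hb.
  - destruct Hb as [<- | []]; simpl; lia.
  - destruct Hb as [<- | Hb]; [simpl; lia |].
    apply in_app_or in Hb.
    destruct Hb as [Hb | Hb]; apply in_map_iff in Hb; destruct Hb as (b' & <- & Hb');
      simpl; pose proof (IH _ Hb'); lia.
Qed.

Lemma new_at_extends (l : list nat) (e : ext) (b : list nat) (x : lform) :
  new_at l e b x -> exists suf, b = l ++ suf /\ suf <> [] /\ binary suf.
Proof.
  destruct e; simpl.
  - intros (i & -> & _); exists (repeat 0 (S i)); repeat split; [discriminate |].
    apply Forall_forall; intros k Hk; apply repeat_spec in Hk; lia.
  - intros (bs & d & p & q & -> & Hbs & Hd & _ & _); exists (bs ++ [d]); repeat split.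
    + intro Hnil; apply app_eq_nil in Hnil; destruct Hnil; discriminate.
    + apply Forall_app; split; auto.
Qed.

Definition box_type (x : eform) : bool :=
  match x with EBox _ | ERhd _ _ | EBoxL _ _ => true | _ => false end.

Definition wakes_only_boxes (T : tab) (aw : list nat -> Prop) : Prop :=
  forall b t x m, aw b -> T b = Some ((t, x), m) -> box_type x = true.

Lemma reawaken_wakes_only_boxes (HC : horn -> Prop) (T : tab)
  (relev : list nat -> Prop) (nu : list nat -> label) :
  wakes_only_boxes T (reawaken HC T relev nu).
Proof.
  intros b t x m (l & _ & _ & t' & x' & m' & Hb & Hx) Hb'.
  rewrite Hb' in Hb; injection Hb; intros; subst.
  destruct Hx as [[[[D ->] | [D [E ->]]] _] | [k [D [-> _]]]]; reflexivity.
Qed.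

Lemma rule_apply_ext (HC : horn -> Prop) (T : tab) (c : list nat) (s : label)
  (A : eform) (T' : tab) :
  rule HC T c s A T' ->
  exists newm relev E aw, apply_ext T c newm relev E aw T' /\
    (forall l, relev l -> through T c l) /\
    newm = (if box_type A then Asleep else Finished) /\
    (box_type A = true -> forall b, ~ aw b) /\
    wakes_only_boxes T aw.
Proof.
  intros Hr.
  assert (Hnowhere : wakes_only_boxes T nowhere) by (intros ? ? ? ? []).
  destruct A as [p | [p | B | B C | B | B C | r B] | B C | B | B C | r B]; simpl in Hr;
    lazymatch type of Hr with
    | exists _, _ => destruct Hr as [? [_ Hr]]
    | _ => idtac
    end;
    do 4 eexists; refine (conj Hr (conj _ (conj eq_refl (conj _ _))));
    first [ intros ? []; assumption | intros ? Hl; exact Hl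
          | intros Hb; discriminate Hb | intros _ ? []
          | exact Hnowhere | apply reawaken_wakes_only_boxes ].
Qed.

Section ApplyExt.
Variables (T T' : tab) (c : list nat) (newm : mark) (relev : list nat -> Prop)
  (E : list nat -> ext) (aw : list nat -> Prop).
Hypothesis ext_T : apply_ext T c newm relev E aw T'.
Hypothesis relev_through : forall l, relev l -> through T c l.

Lemma apply_ext_old (b : list nat) (x : lform) (m : mark) :
  b <> c -> T b = Some (x, m) ->
  T' b = Some (x, m) \/ (aw b /\ T' b = Some (x, Awake)).
Proof.
  intros Hbc Hb; destruct ext_T as (_ & Hwake & Hkeep & _).
  destruct (classic (aw b)) as [Hw | Hw]; [right; split | left]; eauto.
Qed.

Lemma apply_ext_new (b : list nat) (y : lform * mark) :
  T b = None -> T' b = Some y ->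
  snd y = Awake /\
  exists l suf, T l <> None /\ prefix c l /\ b = l ++ suf /\ suf <> [] /\ binary suf.
Proof.
  intros Hb Hy; destruct ext_T as (_ & _ & _ & Hnew).
  destruct (proj1 (Hnew b Hb y) Hy) as (l & x & Hl & Hat & ->); split; [reflexivity |].
  destruct (new_at_extends _ _ _ _ Hat) as (suf & -> & ? & ?).
  destruct (relev_through l Hl) as [[? _] ?]; exists l, suf; auto.
Qed.

Lemma apply_ext_binary : binary_tab T -> binary_tab T'.
Proof.
  intros HT b y Hy; destruct (T b) as [y0 |] eqn:Hb; [eapply HT; eauto |].
  destruct (apply_ext_new b y Hb Hy) as (_ & l & suf & Hl & _ & -> & _ & Hsuf).
  destruct (T l) eqn:Hl'; [| contradiction].
  apply Forall_app; split; [exact (HT _ _ Hl') | exact Hsuf].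
Qed.

End ApplyExt.

Lemma stage_binary (HC : horn -> Prop) (T T' : tab) :
  stage HC T T' -> binary_tab T -> binary_tab T'.
Proof.
  intros [[_ Heq] | (c & s & A & _ & Hr)] HT.
  - intros b y Hy; rewrite Heq in Hy; eauto.
  - destruct (rule_apply_ext _ _ _ _ _ _ Hr) as (newm & relev & E & aw & Hext & Hrel & _).
    exact (apply_ext_binary _ _ _ _ _ _ _ Hext Hrel HT).
Qed.

Lemma systematic_tableau_binary (HC : horn -> Prop) (G : list form) (T : nat -> tab) :
  systematic_tableau HC G T -> forall m, binary_tab (T m).
Proof.
  intros [H0 Hstage] m; induction m as [|m IH].
  - intros b y Hy; rewrite H0 in Hy; unfold init in Hy.
    destruct (forallb (Nat.eqb 0) b) eqn:Hzero; [| discriminate].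
    apply Forall_forall; intros k Hk; rewrite forallb_forall in Hzero.
    pose proof (Hzero k Hk) as Hk0; apply Nat.eqb_eq in Hk0; lia.
  - exact (stage_binary _ _ _ (Hstage m) IH).
Qed.

(* Empty positions count as undone, so that creating nodes never raises the
   count. *)
Definition undone (o : option (lform * mark)) : nat :=
  match o with
  | None => 1
  | Some ((_, x), m) =>
      if box_type x then 0 else match m with Finished => 0 | _ => 1 end
  end.

Definition awake_weight (W D : nat) (b : list nat) (o : option (lform * mark)) : nat :=
  match o with Some (_, Awake) => W ^ (D + 1 - length b) | _ => 0 end.

Definition undone_count (D : nat) (T : tab) : nat :=
  list_sum (map (fun b => undone (T b)) (addrs_upto D)).

Definition weight_base (D : nat) : nat := S (length (addrs_upto D)).

Definition awake_potential (D : nat) (T : tab) : nat :=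
  list_sum (map (fun b => awake_weight (weight_base D) D b (T b)) (addrs_upto D)).

Lemma undone_le_one (o : option (lform * mark)) : undone o <= 1.
Proof. destruct o as [[[t x] [| |]] |]; simpl; try destruct (box_type x); lia. Qed.

Section SelectedRule.
Variables (HC : horn -> Prop) (D : nat) (T T' : tab) (c : list nat) (s : label)
  (A : eform).
Hypothesis binary_T : binary_tab T.
Hypothesis c_depth : length c <= D.
Hypothesis c_awake : T c = Some ((s, A), Awake).
Hypothesis rule_T : rule HC T c s A T'.

Let c_in_addrs : In c (addrs_upto D).
Proof. apply in_addrs_upto; [eapply binary_T; eauto | exact c_depth]. Qed.

Lemma rule_undone_count :
  undone_count D T' + (if box_type A then 0 else 1) <= undone_count D T.
Proof.
  destruct (rule_apply_ext _ _ _ _ _ _ rule_T)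
    as (newm & relev & E & aw & Hext & _ & Hnewm & _ & Haw).
  assert (Hc : undone (T' c) + (if box_type A then 0 else 1) <= undone (T c) + 0).
  { rewrite c_awake, (proj1 Hext _ _ c_awake), Hnewm; simpl.
    destruct (box_type A); simpl; lia. }
  assert (Hother : forall b, In b (addrs_upto D) -> undone (T' b) <= undone (T b) + 0).
  { intros b _; destruct (list_eq_dec Nat.eq_dec b c) as [-> | Hbc]; [lia |].
    destruct (T b) as [[[t x] m] |] eqn:Hb.
    - destruct (apply_ext_old _ _ _ _ _ _ _ Hext b _ _ Hbc Hb) as [-> | [Hw ->]]; [lia |].
      simpl; rewrite (Haw _ _ _ _ Hw Hb); lia.
    - pose proof (undone_le_one (T' b)); simpl; lia. }
  pose proof (list_sum_map_le_shift_at _ _ _ _ _ _ _ c_in_addrs Hc Hother).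
  unfold undone_count; lia.
Qed.

Lemma rule_awake_potential :
  box_type A = true -> awake_potential D T' < awake_potential D T.
Proof.
  intros Hbox.
  destruct (rule_apply_ext _ _ _ _ _ _ rule_T)
    as (newm & relev & E & aw & Hext & Hrel & Hnewm & Hnaw & _).
  rewrite Hbox in Hnewm; specialize (Hnaw Hbox).
  set (W := weight_base D); set (w := W ^ (D - length c)).
  assert (Hw : 0 < w) by (apply Nat.neq_0_lt_0, Nat.pow_nonzero; unfold W, weight_base; lia).
  assert (Hc : awake_weight W D c (T' c) + W * w <= awake_weight W D c (T c) + w).
  { assert (Hpow : W ^ (D + 1 - length c) = W * w)
      by (unfold w; rewrite <- Nat.pow_succ_r'; f_equal; lia).
    rewrite c_awake, (proj1 Hext _ _ c_awake), Hnewm; cbn [awake_weight].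
    rewrite Hpow; lia. }
  assert (Hother : forall b, In b (addrs_upto D) ->
                   awake_weight W D b (T' b) <= awake_weight W D b (T b) + w).
  { intros b Hb; destruct (list_eq_dec Nat.eq_dec b c) as [-> | Hbc]; [lia |].
    destruct (T b) as [[x m] |] eqn:HTb.
    - destruct (apply_ext_old _ _ _ _ _ _ _ Hext b _ _ Hbc HTb) as [-> | [Haw _]];
        [lia | contradiction (Hnaw b)].
    - destruct (T' b) as [y |] eqn:HT'b; [| simpl; lia].
      destruct (apply_ext_new _ _ _ _ _ _ _ Hext Hrel b y HTb HT'b)
        as (Hy & l & suf & _ & [c0 ->] & -> & Hsuf & _).
      destruct y as [x m]; simpl in Hy; subst m; simpl.
      pose proof (addrs_upto_length _ _ Hb) as Hlen.
      rewrite !length_app in Hlen |- *; destruct suf as [| k suf]; [congruence |].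
      simpl in Hlen |- *.
      assert (W ^ (D + 1 - (length c + length c0 + S (length suf))) <= w)
        by (apply Nat.pow_le_mono_r; [unfold W, weight_base | ]; lia).
      lia. }
  pose proof (list_sum_map_le_shift_at _ _ _ _ _ _ _ c_in_addrs Hc Hother).
  assert (Hmul : W * w = length (addrs_upto D) * w + w) by (unfold W, weight_base; lia).
  unfold awake_potential; fold W; lia.
Qed.

End SelectedRule.

Lemma stage_descent (HC : horn -> Prop) (T T' : tab) (a : list nat) (s : label)
  (A : eform) :
  binary_tab T -> T a = Some ((s, A), Awake) -> stage HC T T' ->
  ~ selected T a (s, A) ->
  T' a = Some ((s, A), Awake) /\
  undone_count (length a) T' <= undone_count (length a) T /\
  (undone_count (length a) T' < undone_count (length a) T \/
   awake_potential (length a) T' < awake_potential (length a) T).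
Proof.
  intros HB Ha Hst Hns.
  destruct Hst as [[Hnone _] | (c & s' & A' & [Hc Hmin] & Hr)];
    [exfalso; exact (Hnone a _ Ha) |].
  assert (Hdepth : length c <= length a) by (destruct (Hmin a _ Ha) as [? | [? _]]; lia).
  assert (Hac : a <> c).
  { intros <-; rewrite Ha in Hc; injection Hc as -> ->; apply Hns; split; assumption. }
  destruct (rule_apply_ext _ _ _ _ _ _ Hr) as (newm & relev & E & aw & Hext & _).
  split.
  { destruct (apply_ext_old _ _ _ _ _ _ _ Hext a _ _ Hac Ha) as [-> | [_ ->]]; reflexivity. }
  pose proof (rule_undone_count HC (length a) T T' c s' A' HB Hdepth Hc Hr).
  destruct (box_type A') eqn:Hbox.
  - pose proof (rule_awake_potential HC (length a) T T' c s' A' HB Hdepth Hc Hr Hbox); lia.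
  - lia.
Qed.

Theorem mainTheorem1 (X : form -> Prop) (HC : horn -> Prop)
  (HHorn : Horn_logic_wrt X HC)
  (G : list form) (HG : NoDup G)
  (T : nat -> tab) (HT : systematic_tableau HC G T)
  (n : nat) (a : list nat) (s : label) (A : eform)
  (Hawake : T (S n) a = Some ((s, A), Awake)) :
  exists m, S n <= m /\ selected (T m) a (s, A).
Proof.
  apply (eventually_of_lex_descent
           (fun m => T m a = Some ((s, A), Awake))
           (fun m => selected (T m) a (s, A))
           (fun m => undone_count (length a) (T m))
           (fun m => awake_potential (length a) (T m))); [| exact Hawake].
  intros m Ha Hns.
  exact (stage_descent HC (T m) (T (S m)) a s A
           (systematic_tableau_binary HC G T HT m) Ha (proj2 HT m) Hns).
Qed.
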